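(* Let $\mathcal{R}=(G_0,e\to R)$ be an expanding replacement system with full expansion sequence $\{G_n\}$, symbol space $\Omega$ and gluing relation $\sim$. Then: (1) each gluing vertex is represented by at least one point of $\Omega$; (2) each point of $\Omega$ represents at most one gluing vertex; (3) two distinct points of $\Omega$ are equivalent under $\sim$ if and only if they represent the same gluing vertex; (4) $\sim$ is an equivalence relation.
   Context: A graph means a finite directed multigraph (loops, multiple edges allowed). A replacement system $\mathcal{R}=(G_0,e\to R)$: $G_0$ a graph, $e$ a non-loop directed edge from $v$ to $w$, $R$ a graph containing $v,w$ (initial and terminal vertices of $R$; other vertices interior). Replacing an edge $\varepsilon$ of a graph means deleting it and gluing in a copy of $R$ with initial/terminal vertices identified with those of $\varepsilon$; new edges are $\varepsilon\zeta$ ($\zeta\in E(R)$) and new vertices $\varepsilon\nu$ ($\nu$ interior vertex of $R$). The full expansion sequence: $G_n$ is obtained from $G_{n-1}$ by replacing every edge, so $E(G_n)$ consists of words $\varepsilon_0\cdots\varepsilon_n$ ($\varepsilon_0\in E(G_0)$, $\varepsilon_i\in E(R)$) and $V(G_0)\subset V(G_1)\subset\cdots$. $\mathcal{R}$ is expanding if neither $G_0$ nor $R$ has isolated vertices, the initial and terminal vertices of $R$ are not joined by an edge, and $R$ has at least three vertices and two edges. The symbol space is $\Omega=E(G_0)\times E(R)^{\mathbb{N}}$. The gluing relation: $\varepsilon_0\varepsilon_1\cdots\sim\varepsilon_0'\varepsilon_1'\cdots$ iff for all $n$ the edges $\varepsilon_0\cdots\varepsilon_n$ and $\varepsilon_0'\cdots\varepsilon_n'$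 of $G_n$ share at least one vertex. Gluing vertices are the elements of $\bigcup_n V(G_n)$; a point $\varepsilon_0\varepsilon_1\cdots\in\Omega$ represents a gluing vertex $u$ if the edge $\varepsilon_0\cdots\varepsilon_n$ of $G_n$ is incident on $u$ for all sufficiently large $n$. *)

From mathcomp Require Import all_boot.
Set Implicit Arguments. Unset Strict Implicit. Unset Printing Implicit Defensive.

Record graph := Graph {
  gV : finType;
  gE : finType;
  gsrc : gE -> gV;
  gtgt : gE -> gV }.

(* A replacement system (G0, e -> R): the edge e goes from v to w (v <> w),
   and R is a graph containing the initial vertex v = rinit and terminal
   vertex w = rterm. *)
Record repl_system := ReplSystem {
  G0 : graph;
  RG : graph;
  rinit : gV RG;
  rterm : gV RG;
  rinit_neq_rterm : rinit != rterm }.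

Definition no_isolated (G : graph) : Prop :=
  forall v : gV G, exists x : gE G, gsrc x = v \/ gtgt x = v.

Definition expanding (S : repl_system) : Prop :=
  [/\ no_isolated (G0 S), no_isolated (RG S),
      (forall z : gE (RG S),
         ~ ((gsrc z = rinit S /\ gtgt z = rterm S) \/
            (gsrc z = rterm S /\ gtgt z = rinit S))),
      3 <= #|gV (RG S)| & 2 <= #|gE (RG S)| ]%N.

Section Expansion.
Variable S : repl_system.
Local Notation E0 := (gE (G0 S)).
Local Notation V0 := (gV (G0 S)).
Local Notation ER := (gE (RG S)).
Local Notation VR := (gV (RG S)).

(* Vertices of the expansion sequence: a vertex of G0, or a word
   eps0 eps1 ... epsk nu (with nu an interior vertex of R), the vertex
   created when replacing the edge eps0 ... epsk of G_k. *)
Inductive vtx :=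
  | Base of V0
  | New of E0 & seq ER & VR.

Definition interior (nu : VR) : bool := (nu != rinit S) && (nu != rterm S).

(* Gluing vertices: elements of the union of all V(G_n). *)
Definition gluing_vertex (u : vtx) : Prop :=
  match u with
  | Base _ => True
  | New _ _ nu => interior nu
  end.

(* Endpoints (source, target) of the edge eps0 (rev rl) of G_(size rl). *)
Fixpoint ends_rev (e0 : E0) (rl : seq ER) : vtx * vtx :=
  match rl with
  | [::] => (Base (gsrc e0), Base (gtgt e0))
  | z :: rl' =>
      let st := ends_rev e0 rl' in
      let conv nu :=
        if nu == rinit S then st.1
        else if nu == rterm S then st.2
        else New e0 (rev rl') nu in
      (conv (gsrc z), conv (gtgt z))
  end.

(* Source and target of the edge eps0 eps1 ... epsn of G_n, where l = [eps1;...;epsn]. *)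
Definition edge_src (e0 : E0) (l : seq ER) : vtx := (ends_rev e0 (rev l)).1.
Definition edge_tgt (e0 : E0) (l : seq ER) : vtx := (ends_rev e0 (rev l)).2.

Definition incident (e0 : E0) (l : seq ER) (u : vtx) : Prop :=
  edge_src e0 l = u \/ edge_tgt e0 l = u.

(* Symbol space Omega = E(G0) x E(R)^N; a point (e0, f) is
   eps0 eps1 eps2 ... with eps0 = e0 and eps_(i+1) = f i. *)
Definition Omega := (E0 * (nat -> ER))%type.

(* The edge eps0 ... epsn of G_n determined by a point. *)
Definition prefix (x : Omega) (n : nat) : seq ER := mkseq x.2 n.

Definition share_vertex (e0 : E0) (l : seq ER) (e0' : E0) (l' : seq ER) : Prop :=
  exists u : vtx, incident e0 l u /\ incident e0' l' u.

Definition gluing_rel (x y : Omega) : Prop :=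
  forall n : nat, share_vertex x.1 (prefix x n) y.1 (prefix y n).

Definition represents (x : Omega) (u : vtx) : Prop :=
  exists N : nat, forall n : nat, (N <= n)%N -> incident x.1 (prefix x n) u.

End Expansion.

From Pilot Require Import Defs.
From Stdlib Require Import Classical FunctionalExtensionality.
From mathcomp Require Import all_boot.
Set Implicit Arguments. Unset Strict Implicit. Unset Printing Implicit Defensive.

(* A vertex that first appears in G_n lies only on edges of later G_m that
   descend from the edge it was created on, while a vertex of G_k lying on an
   edge of G_n (n >= k) already lies on the ancestor of that edge in G_k.  So if
   two different points first differ at level k and share a vertex at every
   level, then at each level n >= k they share an endpoint of their level-k edge.
   For a fixed old vertex the set of such levels is downward closed, hence one
   endpoint is shared from level k on, and both points represent it.  A point
   represents at most one vertex: as R has no edge joining v and w, every edge of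
   R has an interior endpoint or is a loop, so an edge of G_(n+1) contains at most
   one vertex of G_n. *)

Section Expansion.
Variable S : repl_system.
Local Notation E0 := (gE (G0 S)).
Local Notation ER := (gE (RG S)).
Local Notation VR := (gV (RG S)).
Local Notation V := (vtx S).
Local Notation New := (@New S).

(* The vertex of G_(n+1) that the vertex nu of R becomes when the edge e0 l
   of G_n, with endpoints st, is replaced. *)
Definition lift_vtx (st : V * V) (e0 : E0) (l : seq ER) (nu : VR) : V :=
  if nu == rinit S then st.1 else if nu == rterm S then st.2 else New e0 l nu.

(* The least n such that u is a vertex of G_n. *)
Definition level (u : V) : nat := if u is Defs.New _ w _ then (size w).+1 else 0.

Definition rend (b : bool) : VR := if b then rinit S else rterm S.

Definition gend (G : graph) (b : bool) (x : gE G) : gV G :=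
  if b then gsrc x else gtgt x.

Definition endpoint (b : bool) (e0 : E0) (l : seq ER) : V :=
  if b then edge_src e0 l else edge_tgt e0 l.

Lemma ends_rcons (e0 : E0) (l : seq ER) (z : ER) :
  ends_rev e0 (rev (rcons l z)) =
  (lift_vtx (ends_rev e0 (rev l)) e0 l (gsrc z),
   lift_vtx (ends_rev e0 (rev l)) e0 l (gtgt z)).
Proof. by rewrite rev_rcons /= revK. Qed.

Lemma lift_vtx_rend (st : V * V) (e0 : E0) (l : seq ER) (b : bool) :
  lift_vtx st e0 l (rend b) = if b then st.1 else st.2.
Proof.
by case: b; rewrite /lift_vtx /= eqxx // eq_sym (negbTE (rinit_neq_rterm S)).
Qed.

Lemma lift_vtx_interior (st : V * V) (e0 : E0) (l : seq ER) (nu : VR) :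
  interior nu -> lift_vtx st e0 l nu = New e0 l nu.
Proof. by rewrite /lift_vtx => /andP[/negbTE -> /negbTE ->]. Qed.

Lemma endpoint_rcons (b : bool) (e0 : E0) (l : seq ER) (z : ER) :
  endpoint b e0 (rcons l z) = lift_vtx (ends_rev e0 (rev l)) e0 l (gend b z).
Proof. by rewrite /endpoint /edge_src /edge_tgt ends_rcons; case: b. Qed.

Lemma endpoint_incident (b : bool) (e0 : E0) (l : seq ER) :
  incident e0 l (endpoint b e0 l).
Proof. by case: b; [left|right]. Qed.

Lemma incident_rcons (e0 : E0) (l : seq ER) (z : ER) (u : V) :
  incident e0 (rcons l z) u ->
  incident e0 l u \/ exists2 nu, interior nu & u = New e0 l nu.
Proof.
have lift_cases nu : lift_vtx (ends_rev e0 (rev l)) e0 l nu = u ->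
    incident e0 l u \/ exists2 nu, interior nu & u = New e0 l nu.
  rewrite /lift_vtx; case: eqP => [_ <-|/eqP ni]; first by left; left.
  case: eqP => [_ <-|/eqP nt <-]; first by left; right.
  by right; exists nu => //; apply/andP.
by rewrite /incident /edge_src /edge_tgt ends_rcons => -[] /lift_cases.
Qed.

Lemma incident_gluing_level (e0 : E0) (l : seq ER) (u : V) :
  incident e0 l u -> gluing_vertex u /\ level u <= size l.
Proof.
elim/last_ind: l u => [|l z IH] u; first by rewrite /incident => -[<-|<-].
rewrite size_rcons; case/incident_rcons => [/IH [gu lu]|[nu inu ->]] //.
by split=> //; apply: leqW.
Qed.

Lemma incident_cat (e0 : E0) (l m : seq ER) (u : V) :
  incident e0 (l ++ m) u ->
  incident e0 l u \/ exists m' nu, u = New e0 (l ++ m') nu.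
Proof.
elim/last_ind: m u => [|m z IH] u; first by rewrite cats0; left.
rewrite -rcons_cat => /incident_rcons [/IH //|[nu _ ->]].
by right; exists m, nu.
Qed.

Lemma incident_cat_old (e0 : E0) (l m : seq ER) (u : V) :
  level u <= size l -> incident e0 (l ++ m) u -> incident e0 l u.
Proof.
move=> lu /incident_cat [//|[m' [nu Eu]]].
by rewrite Eu /= size_cat ltnNge leq_addr in lu.
Qed.

Lemma incident_cat_shared (e0 e0' : E0) (l m l' m' : seq ER) (u : V) :
  size l = size l' -> (e0, l) <> (e0', l') ->
  incident e0 (l ++ m) u -> incident e0' (l' ++ m') u ->
  incident e0 l u /\ incident e0' l' u.
Proof.
move=> sl neq iu iu'.
suff lu : level u <= size l.
  by split; [apply: incident_cat_old iu | apply: incident_cat_old iu'; rewrite -sl].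
case: (incident_cat iu) => [/incident_gluing_level[] //|[m1 [nu Eu]]].
case: (incident_cat iu') => [/incident_gluing_level[_]|[m2 [nu' Eu']]].
  by rewrite sl.
rewrite Eu in Eu'; case: Eu' => e0E /eqP; rewrite eqseq_cat // => /andP[/eqP lE _] _.
by case: neq; rewrite e0E lE.
Qed.

Definition incident_at (x : Omega S) (n : nat) (u : V) : Prop :=
  incident x.1 (Defs.prefix x n) u.

Lemma prefix_size (x : Omega S) (n : nat) : size (Defs.prefix x n) = n.
Proof. exact: size_mkseq. Qed.

Lemma prefixS (x : Omega S) (n : nat) :
  Defs.prefix x n.+1 = rcons (Defs.prefix x n) (x.2 n).
Proof. exact: mkseqS. Qed.

Lemma prefix_cat (x : Omega S) (k n : nat) : k <= n ->
  Defs.prefix x n = Defs.prefix x k ++ drop k (Defs.prefix x n).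
Proof.
move=> kn; rewrite -{1}(cat_take_drop k (Defs.prefix x n)); congr (_ ++ _).
by rewrite /Defs.prefix /mkseq -map_take take_iota (minn_idPl kn).
Qed.

Lemma incident_at_level (x : Omega S) (n : nat) (u : V) :
  incident_at x n u -> level u <= n.
Proof. by move/incident_gluing_level => [_]; rewrite prefix_size. Qed.

Lemma incident_at_mono (x : Omega S) (m n : nat) (u : V) :
  level u <= m -> m <= n -> incident_at x n u -> incident_at x m u.
Proof.
by move=> lu mn; rewrite /incident_at (prefix_cat x mn); apply: incident_cat_old;
  rewrite prefix_size.
Qed.

Lemma incident_at_split (x y : Omega S) (k n : nat) (u : V) : k <= n ->
  (x.1, Defs.prefix x k) <> (y.1, Defs.prefix y k) ->
  incident_at x n u -> incident_at y n u -> incident_at x k u /\ incident_at y k u.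
Proof.
move=> kn neq; rewrite /incident_at (prefix_cat x kn) (prefix_cat y kn).
by apply: incident_cat_shared neq; rewrite !prefix_size.
Qed.

Lemma Omega_prefix_neq (x y : Omega S) : x <> y ->
  exists k, (x.1, Defs.prefix x k) <> (y.1, Defs.prefix y k).
Proof.
move=> xy; apply: NNPP => nk; apply: xy.
have E k : (x.1, Defs.prefix x k) = (y.1, Defs.prefix y k).
  by apply: NNPP => ne; apply: nk; exists k.
case: x y E {nk} => [e f] [e' g] E; case: (E 0) => /= ->; congr pair.
apply: functional_extensionality => i.
have /(congr1 (nth (f 0) ^~ i)) := congr1 snd (E i.+1).
by rewrite /= !nth_mkseq.
Qed.

Lemma represents_gluing_rel (x y : Omega S) (u : V) :
  represents x u -> represents y u -> gluing_rel x y.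
Proof.
move=> [Nx hx] [Ny hy] n; set N := maxn n (maxn Nx Ny).
have nN : n <= N := leq_maxl _ _.
have ixN : incident_at x N u by apply: hx; rewrite !leq_max leqnn !orbT.
have iyN : incident_at y N u by apply: hy; rewrite !leq_max leqnn !orbT.
case: ((x.1, Defs.prefix x n) =P (y.1, Defs.prefix y n)) => [[-> ->]|neq].
  by exists (edge_src y.1 (Defs.prefix y n)); split; left.
by exists u; apply: incident_at_split nN neq ixN iyN.
Qed.

Lemma downward_closed_cover (P Q : nat -> Prop) :
  (forall m n, m <= n -> P n -> P m) -> (forall m n, m <= n -> Q n -> Q m) ->
  (forall n, P n \/ Q n) -> (forall n, P n) \/ (forall n, Q n).
Proof.
move=> closedP closedQ cover.
case: (classic (forall n, P n)) => [|/not_all_ex_not [n0 nP0]]; [by left | right].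
move=> n; case: (cover (maxn n n0)) => [Pm|]; last exact/closedQ/leq_maxl.
by case: nP0; apply: closedP Pm; apply: leq_maxr.
Qed.

Lemma gluing_rel_represents (x y : Omega S) : x <> y -> gluing_rel x y ->
  exists u, gluing_vertex u /\ represents x u /\ represents y u.
Proof.
move=> xy glue; have [k neq] := Omega_prefix_neq xy.
pose shared u n := incident_at x (k + n) u /\ incident_at y (k + n) u.
have early a : incident_at x k a -> gluing_vertex a /\ level a <= k.
  by move/incident_gluing_level; rewrite prefix_size.
have closed a : incident_at x k a -> forall m n, m <= n -> shared a n -> shared a m.
  move=> /early[_ la] m n mn [ix iy].
  have lam : level a <= k + m := leq_trans la (leq_addr m k).
  by split; [apply: incident_at_mono ix | apply: incident_at_mono iy];
    rewrite // leq_add2l.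
have sharedP a : incident_at x k a -> (forall n, shared a n) ->
    exists u, gluing_vertex u /\ represents x u /\ represents y u.
  move=> /early[ga _] sh; exists a; split=> //.
  by split; exists k => n kn; rewrite -(subnKC kn); case: (sh (n - k)).
set a1 := edge_src x.1 (Defs.prefix x k); set a2 := edge_tgt x.1 (Defs.prefix x k).
have [ia1 ia2] : incident_at x k a1 /\ incident_at x k a2 by split; [left|right].
have cover n : shared a1 n \/ shared a2 n.
  have [u [ix iy]] := glue (k + n).
  have [[E|E] _] := incident_at_split (leq_addr n k) neq ix iy.
  - by left; rewrite /a1 E.
  - by right; rewrite /a2 E.
by case: (downward_closed_cover (closed _ ia1) (closed _ ia2) cover);
  [apply: sharedP ia1 | apply: sharedP ia2].
Qed.

Lemma gluing_rel_refl (x : Omega S) : gluing_rel x x.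
Proof. by move=> n; exists (edge_src x.1 (Defs.prefix x n)); split; left. Qed.

Lemma gluing_rel_sym (x y : Omega S) : gluing_rel x y -> gluing_rel y x.
Proof. by move=> h n; have [u [hx hy]] := h n; exists u. Qed.

Section NoDirectEdge.
Hypothesis no_init_term_edge : forall z : ER,
  ~ ((gsrc z = rinit S /\ gtgt z = rterm S) \/ (gsrc z = rterm S /\ gtgt z = rinit S)).

Lemma edge_interior_or_loop (z : ER) :
  interior (gsrc z) \/ interior (gtgt z) \/ gsrc z = gtgt z.
Proof.
have no_edge := @no_init_term_edge z; rewrite /interior.
case: (gsrc z =P rinit S) => [si|_]; case: (gsrc z =P rterm S) => [st|_];
case: (gtgt z =P rinit S) => [ti|_]; case: (gtgt z =P rterm S) => [tt|_];
by [left | right; left | right; right; congruence | case: no_edge; tauto].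
Qed.

Lemma incident_rcons_old_unique (e0 : E0) (l : seq ER) (z : ER) (u1 u2 : V) :
  level u1 <= size l -> level u2 <= size l ->
  incident e0 (rcons l z) u1 -> incident e0 (rcons l z) u2 -> u1 = u2.
Proof.
set st := ends_rev e0 (rev l).
have old nu u : lift_vtx st e0 l nu = u -> level u <= size l -> ~~ interior nu.
  by move=> <-; apply: contraTN => /(lift_vtx_interior st) -> /=; rewrite ltnn.
move=> l1 l2; rewrite /incident /edge_src /edge_tgt ends_rcons -/st /=.
case: (edge_interior_or_loop z) => [si|[ti|->]].
- by case=> [/old/(_ l1)/negP|<-] //; case=> [/old/(_ l2)/negP|<-].
- by case=> [<-|/old/(_ l1)/negP] //; case=> [<-|/old/(_ l2)/negP].
- by case=> <-; case=> <-.
Qed.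

Lemma represents_unique (x : Omega S) (u1 u2 : V) :
  represents x u1 -> represents x u2 -> u1 = u2.
Proof.
move=> [N1 h1] [N2 h2]; set N := maxn N1 N2.
have [i1 i2] : incident_at x N u1 /\ incident_at x N u2.
  by split; [apply: h1 (leq_maxl _ _) | apply: h2 (leq_maxr _ _)].
apply: (@incident_rcons_old_unique x.1 (Defs.prefix x N) (x.2 N));
  rewrite ?prefix_size -?prefixS.
- exact: incident_at_level i1.
- exact: incident_at_level i2.
- by apply: h1; rewrite leqW // leq_maxl.
- by apply: h2; rewrite leqW // leq_maxr.
Qed.

Lemma gluing_rel_trans (x y z : Omega S) :
  gluing_rel x y -> gluing_rel y z -> gluing_rel x z.
Proof.
case: (classic (x = y)) => [-> //|nxy]; case: (classic (y = z)) => [<- //|nyz].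
move=> /(gluing_rel_represents nxy) [u [_ [hx hy]]].
move=> /(gluing_rel_represents nyz) [v [_ [hy' hz]]].
rewrite (represents_unique hy hy') in hx.
exact: represents_gluing_rel hx hz.
Qed.

End NoDirectEdge.

Section Existence.
Hypothesis R_no_isolated : no_isolated (RG S).

Lemma no_isolated_rend_step :
  exists next : bool -> ER * bool, forall b, gend (next b).2 (next b).1 = rend b.
Proof.
have [za hza] := R_no_isolated (rinit S); have [zb hzb] := R_no_isolated (rterm S).
exists (fun b => if b then (za, gsrc za == rinit S) else (zb, gsrc zb == rterm S)).
by case=> /=; case: eqP => //= ne; [case: hza | case: hzb].
Qed.

Definition prepend (l : seq ER) (g : nat -> ER) (i : nat) : ER :=
  nth (g (i - size l)) l i.

Lemma prefix_prepend (e0 : E0) (l : seq ER) (g : nat -> ER) (n : nat) :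
  size l <= n ->
  Defs.prefix (e0, prepend l g) n = l ++ mkseq g (n - size l).
Proof.
move=> ln; apply: (@eq_from_nth _ (g 0)); first by rewrite size_cat !size_mkseq subnKC.
move=> i; rewrite size_mkseq => ni; rewrite /Defs.prefix nth_mkseq //= nth_cat /prepend.
case: ltnP => il; first exact: set_nth_default.
by rewrite nth_default // nth_mkseq // ltn_sub2r // (leq_ltn_trans il ni).
Qed.

Lemma represents_of_endpoint (b : bool) (e0 : E0) (l : seq ER) :
  exists x, represents x (endpoint b e0 l).
Proof.
have [next hnext] := no_isolated_rend_step.
pose side n := iter n (fun c => (next c).2) b.
pose g n := (next (side n)).1.
have keep n : endpoint (side n) e0 (l ++ mkseq g n) = endpoint b e0 l.
  elim: n => [|n <-]; first by rewrite cats0.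
  rewrite mkseqS -rcons_cat endpoint_rcons /= hnext lift_vtx_rend.
  by case: (side n).
exists (e0, prepend l g), (size l) => n ln.
by rewrite /= prefix_prepend // -(keep (n - size l)); apply: endpoint_incident.
Qed.

Lemma gluing_vertex_endpoint (G0_no_isolated : no_isolated (G0 S)) (u : V) :
  gluing_vertex u -> exists b e0 l, endpoint b e0 l = u.
Proof.
case: u => [v|e0 w nu] /= gu.
  have [e he] := G0_no_isolated v.
  by case: he => he; [exists true | exists false]; exists e, [::];
    rewrite /endpoint /edge_src /edge_tgt /= he.
have [z hz] := R_no_isolated nu.
case: hz => hz; [exists true | exists false]; exists e0, (rcons w z);
  by rewrite endpoint_rcons /= hz lift_vtx_interior.
Qed.

End Existence.

End Expansion.

Theorem proposition1p21 (S : repl_system) (Hexp : expanding S) :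
  (* (1) *)
  (forall u : vtx S, gluing_vertex u -> exists x : Omega S, represents x u) /\
  (* (2) *)
  (forall (x : Omega S) (u1 u2 : vtx S),
     gluing_vertex u1 -> gluing_vertex u2 ->
     represents x u1 -> represents x u2 -> u1 = u2) /\
  (* (3) *)
  (forall x y : Omega S, x <> y ->
     (gluing_rel x y <->
      exists u : vtx S, gluing_vertex u /\ represents x u /\ represents y u)) /\
  (* (4) *)
  (forall x : Omega S, gluing_rel x x) /\
  (forall x y : Omega S, gluing_rel x y -> gluing_rel y x) /\
  (forall x y z : Omega S, gluing_rel x y -> gluing_rel y z -> gluing_rel x z).
Proof.
case: Hexp => HG0 HR Hedge _ _.
split.
  move=> u /(gluing_vertex_endpoint HR HG0) [b [e0 [l <-]]].
  exact: (represents_of_endpoint HR).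
split; first by move=> x u1 u2 _ _; apply: (represents_unique Hedge).
split.
  move=> x y xy; split; first exact: gluing_rel_represents.
  by case=> u [_ [hx hy]]; apply: represents_gluing_rel hx hy.
split; first exact: gluing_rel_refl.
split; first exact: gluing_rel_sym.
exact: (gluing_rel_trans Hedge).
Qed.
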